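(* Let $\mathcal{H}$ be a complex Hilbert space and $T,W\in\mathcal{B}(\mathcal{H})$ with $W\geq0$. Then there exist $T_{lr},T_{ls}\in\mathcal{B}(\mathcal{H})$ such that $T=T_{lr}+T_{ls}$, $T_{lr}$ is $W$-left regular and $T_{ls}$ is $W$-left strongly singular.
   Context: $\mathcal{B}(\mathcal{H})$ is the set of bounded everywhere defined operators on $\mathcal{H}$; $S\geq0$ means $\langle Sf,f\rangle\geq0$ for all $f$. For non-negative $S,W\in\mathcal{B}(\mathcal{H})$: $S$ is $W$-absolutely continuous if $\langle Wf_n,f_n\rangle\to0$ and $\langle S(f_n-f_m),f_n-f_m\rangle\to0$ imply $\langle Sf_n,f_n\rangle\to0$; $S$ is $W$-singular if the only $Q\in\mathcal{B}(\mathcal{H})$ with $0\leq Q\leq S$ and $0\leq Q\leq W$ is $Q=0$. $M_l(T)$ is the set of non-negative $S_1\in\mathcal{B}(\mathcal{H})$ for which there is a non-negative $S_2\in\mathcal{B}(\mathcal{H})$ with $|\langle Tf,g\rangle|\leq\langle S_1f,f\rangle^{1/2}\langle S_2g,g\rangle^{1/2}$ for all $f,g\in\mathcal{H}$. $T$ is $W$-left regular if some $S_1\in M_l(T)$ is $W$-absolutely continuous, and $W$-left strongly singular if some $S_1\in M_l(T)$ is $W$-singular. *)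

(* Complex scalars: R[i] for R : realType (real_closed/complex),
   which carries the numClosedFieldType structure (order, norm, conjugation, sqrtC). *)
From mathcomp Require Import all_boot all_order all_algebra.
From mathcomp Require Import reals complex.
Set Implicit Arguments.
Unset Strict Implicit.
Unset Printing Implicit Defensive.
Import Order.TTheory GRing.Theory Num.Theory.
Local Open Scope ring_scope.

Section Hilbert.
Variable R : realType.
Local Notation C := (R[i]).
Variable H : lmodType C.
Variable ip : H -> H -> C.

Definition hnorm (x : H) : C := sqrtC (ip x x).

Definition is_hilbert : Prop :=
  [/\ (forall (a : C) (x y z : H), ip (a *: x + y) z = a * ip x z + ip y z),
      (forall x y : H, ip x y = (ip y x)^*),
      (forall x : H, 0 <= ip x x),
      (forall x : H, ip x x = 0 -> x = 0) &
      (forall u : nat -> H,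
         (forall e : C, 0 < e -> exists N : nat, forall m n : nat,
            (N <= m)%N -> (N <= n)%N -> hnorm (u m - u n) < e) ->
         exists l : H, forall e : C, 0 < e -> exists N : nat, forall n : nat,
            (N <= n)%N -> hnorm (u n - l) < e)].

Definition bounded (T : H -> H) : Prop :=
  exists M : C, forall f : H, hnorm (T f) <= M * hnorm f.

Definition in_BH (T : {linear H -> H}) : Prop := bounded T.

Definition nonneg_op (S : {linear H -> H}) : Prop :=
  forall f : H, 0 <= ip (S f) f.

Definition seq_to0 (a : nat -> C) : Prop :=
  forall e : C, 0 < e -> exists N : nat, forall n : nat, (N <= n)%N -> `|a n| < e.

Definition dseq_to0 (a : nat -> nat -> C) : Prop :=
  forall e : C, 0 < e -> exists N : nat, forall n m : nat,
    (N <= n)%N -> (N <= m)%N -> `|a n m| < e.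

Definition abs_cont (W S : {linear H -> H}) : Prop :=
  forall f : nat -> H,
    seq_to0 (fun n => ip (W (f n)) (f n)) ->
    dseq_to0 (fun n m => ip (S (f n - f m)) (f n - f m)) ->
    seq_to0 (fun n => ip (S (f n)) (f n)).

Definition singular (W S : {linear H -> H}) : Prop :=
  forall Q : {linear H -> H}, in_BH Q ->
    nonneg_op Q -> (forall f, ip (Q f) f <= ip (S f) f) ->
    (forall f, ip (Q f) f <= ip (W f) f) ->
    forall f, Q f = 0.

Definition in_Ml (T S1 : {linear H -> H}) : Prop :=
  [/\ in_BH S1, nonneg_op S1 &
    exists S2 : {linear H -> H}, [/\ in_BH S2, nonneg_op S2 &
      forall f g : H, `|ip (T f) g| <= sqrtC (ip (S1 f) f) * sqrtC (ip (S2 g) g)]].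

Definition left_regular (W T : {linear H -> H}) : Prop :=
  exists S1 : {linear H -> H}, in_Ml T S1 /\ abs_cont W S1.

Definition left_strongly_singular (W T : {linear H -> H}) : Prop :=
  exists S1 : {linear H -> H}, in_Ml T S1 /\ singular W S1.

End Hilbert.

(* Let P be the orthogonal projection onto ker W, which is closed since W is
   bounded, and write T = T (1 - P) + T P.  As P and 1 - P are orthogonal
   projections, |<T P f, g>| <= |T| |P f| |g| = <|T|^2 P f, f>^(1/2) <g, g>^(1/2),
   so |T|^2 P lies in M_l(T P), and likewise for 1 - P.
   A form 0 <= Q <= c P with Q <= W vanishes on ran P = ker W, where <W f, f> = 0,
   and on ker P, where <c P f, f> = 0; hence c P is W-singular.
   If <W f_n, f_n> -> 0 and ((1 - P) f_n) is Cauchy, its limit lies in ker W,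
   because W is bounded and nonnegative, and in (ker W)^perp, so it is 0:
   c (1 - P) is W-absolutely continuous. *)

From HB Require Import structures.
From mathcomp Require Import all_boot all_order all_algebra.
From mathcomp Require Import reals complex.
From mathcomp Require Import boolp classical_sets.
From mathcomp Require Import ring.
Set Implicit Arguments.
Unset Strict Implicit.
Unset Printing Implicit Defensive.
Import Order.TTheory GRing.Theory Num.Theory.
Local Open Scope ring_scope.

Section ComplexOrder.
Variable R : realType.
Local Notation C := R[i].

Lemma ge0_Re (z : C) : 0 <= z -> z = ((complex.Re z)%:C)%C.
Proof. by case: z => a b; rewrite lecE /= => /andP[/eqP -> _]. Qed.

Lemma archiC (e : C) : 0 < e ->
  exists N : nat, forall n, (N <= n)%N -> n.+1%:R^-1 < e.
Proof.
move=> e0; have he := ge0_Re (ltW e0); rewrite he; rewrite he ltcR in e0.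
set a := complex.Re e in e0 *.
exists (Num.bound a^-1) => n hn.
rewrite -(rmorph_nat (real_complex R)) -fmorphV ltcR.
rewrite invf_plt ?posrE ?ltr0Sn //.
apply: (lt_trans (archi_boundP _)); first by rewrite invr_ge0 ltW.
by rewrite ltr_nat ltnS.
Qed.

Lemma ge0_infC (P : C -> Prop) : (exists z, P z) -> (forall z, P z -> 0 <= z) ->
  exists d : C, [/\ 0 <= d, forall z, P z -> d <= z &
                 forall e, 0 < e -> exists2 z, P z & z < d + e].
Proof.
move=> [z0 Pz0] P0.
pose E : set R := fun r => P (r%:C)%C.
have Ene : nonempty E by exists (complex.Re z0); rewrite /E /= -ge0_Re ?P0.
have Elb : lbound E 0 by move=> r; rewrite /E /= => /P0; rewrite lecR.
have Ehi : has_inf E by split => //; exists 0.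
exists ((inf E)%:C)%C; split.
- by rewrite lecR; apply: lb_le_inf.
- move=> z Pz; rewrite (ge0_Re (P0 _ Pz)) lecR; apply: ge_inf; first by exists 0.
  by rewrite /E /= -ge0_Re ?P0.
- move=> e e0; have he := ge0_Re (ltW e0); rewrite he; rewrite he ltcR in e0.
  have [r Er hr] := inf_adherent e0 Ehi.
  by exists (r%:C)%C => //; rewrite -rmorphD ltcR.
Qed.

Lemma ler_lt_addgt0 (x d : C) : x - d \is Num.real ->
  (forall e, 0 < e -> x < d + e) -> x <= d.
Proof.
move=> xr h; rewrite -subr_le0.
case/orP: (xr) => // hge.
have [->|en0] := eqVneq (x - d) 0; first by [].
have ep : 0 < x - d by rewrite lt_def en0 hge.
by have := h _ ep; rewrite addrC subrK ltxx.
Qed.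

Lemma ge0_lt_gt0_eq0 (x : C) : 0 <= x -> (forall e, 0 < e -> x < e) -> x = 0.
Proof.
move=> x0 hx; apply/le_anti; rewrite x0 andbT.
by apply: ler_lt_addgt0 => [|e /hx]; rewrite ?subr0 ?add0r ?ger0_real.
Qed.

Lemma addCJ_le_norm (z : C) : z + z^* <= 2%:R * `|z|.
Proof.
have -> : z + z^* = 2%:R * 'Re z by rewrite ReE; field.
rewrite ler_pM2l ?ltr0n //.
apply: le_trans (real_ler_norm (Creal_Re z)) _.
exact: (leif_normC_Re_Creal z).1.
Qed.

Lemma real_quad_ge0_eq0 (s q : C) : 0 <= q ->
  (forall r : C, r \is Num.real -> 0 <= r * s + r ^+ 2 * q) -> s = 0.
Proof.
move=> q0 h.
have h1 := h 1 (real1 _); rewrite mul1r expr1n mul1r in h1.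
have sr : s \is Num.real by rewrite -[s](addrK q) realB ?ger0_real.
have q1 : q + 1 != 0 by rewrite gt_eqF // ltr_wpDl.
have tr : s / (q + 1) \is Num.real by rewrite realM // realV realD ?ger0_real.
have := h (- (s / (q + 1))); rewrite realN => /(_ tr).
have -> : - (s / (q + 1)) * s + (- (s / (q + 1))) ^+ 2 * q =
          - ((s / (q + 1)) * (s / (q + 1))^*).
  by rewrite (conj_Creal tr); field.
rewrite oppr_ge0 => hle.
have : (s / (q + 1)) * (s / (q + 1))^* = 0.
  by apply/eqP; rewrite eq_le hle mul_conjC_ge0.
by move/eqP; rewrite mul_conjC_eq0 mulf_eq0 invr_eq0 (negbTE q1) orbF => /eqP.
Qed.

Lemma sesq_ge0_eq0 (s t q : C) : 0 <= q ->
  (forall c : C, 0 <= c^* * s + c * t + c * c^* * q) -> s = 0 /\ t = 0.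
Proof.
move=> q0 h.
have st : s + t = 0.
  apply: (real_quad_ge0_eq0 q0) => r hr; have := h r.
  by rewrite (conj_Creal hr) -mulrDr expr2.
have ts : s = t.
  suff : 'i * s - 'i * t = 0.
    by move/eqP; rewrite -mulrBr mulf_eq0 (negbTE (neq0Ci _)) subr_eq0 => /eqP.
  apply: (real_quad_ge0_eq0 q0) => r hr; have := h (r * - 'i).
  rewrite rmorphM rmorphN /= conjCi opprK (conj_Creal hr).
  have ii : 'i * 'i = -1 :> C by rewrite -expr2 sqrCi.
  have -> : r * - 'i * (r * 'i) = r ^+ 2 * - ('i * 'i) by rewrite expr2; ring.
  by rewrite ii opprK mulr1 mulrBr mulrA mulrN mulNr mulrA -addrA.
move: st; rewrite -ts => /eqP; rewrite -mulr2n -mulr_natr mulf_eq0 pnatr_eq0 orbF.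
by move/eqP.
Qed.

End ComplexOrder.

Section InnerProductSpace.
Variable R : realType.
Local Notation C := R[i].
Variables (H : lmodType C) (ip : H -> H -> C).
Hypothesis hH : is_hilbert ip.

Lemma ipDZl a x y z : ip (a *: x + y) z = a * ip x z + ip y z.
Proof. by case: hH => h _ _ _ _; apply: h. Qed.

Lemma ipC x y : ip x y = (ip y x)^*.
Proof. by case: hH => _ h _ _ _; apply: h. Qed.

Lemma ip_ge0 x : 0 <= ip x x.
Proof. by case: hH => _ _ h _ _; apply: h. Qed.

Lemma ip_eq0 x : ip x x = 0 -> x = 0.
Proof. by case: hH => _ _ _ h _; apply: h. Qed.

Lemma ip0l z : ip 0 z = 0.
Proof.
apply: (addrI (ip 0 z)); rewrite addr0 -{1}(mul1r (ip 0 z)) -ipDZl.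
by rewrite scaler0 addr0.
Qed.

Lemma ipDl x y z : ip (x + y) z = ip x z + ip y z.
Proof. by rewrite -[x in LHS]scale1r ipDZl mul1r. Qed.

Lemma ipZl a x z : ip (a *: x) z = a * ip x z.
Proof. by rewrite -[a *: x]addr0 ipDZl ip0l addr0. Qed.

Lemma ipNl x z : ip (- x) z = - ip x z.
Proof. by rewrite -scaleN1r ipZl mulN1r. Qed.

Lemma ipBl x y z : ip (x - y) z = ip x z - ip y z.
Proof. by rewrite ipDl ipNl. Qed.

Lemma ip0r z : ip z 0 = 0.
Proof. by rewrite ipC ip0l conjC0. Qed.

Lemma ipDr x y z : ip z (x + y) = ip z x + ip z y.
Proof. by rewrite [ip z x]ipC [ip z y]ipC ipC ipDl rmorphD. Qed.

Lemma ipZr a x z : ip z (a *: x) = a^* * ip z x.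
Proof. by rewrite [ip z x]ipC ipC ipZl rmorphM. Qed.

Lemma ipNr x z : ip z (- x) = - ip z x.
Proof. by rewrite [ip z x]ipC ipC ipNl rmorphN. Qed.

Lemma ip_real x : ip x x \is Num.real.
Proof. exact: ger0_real (ip_ge0 x). Qed.

Lemma ip_diagN v : ip (- v) (- v) = ip v v.
Proof. by rewrite ipNl ipNr opprK. Qed.

Lemma ip_diagB u v : ip (u - v) (u - v) = ip (v - u) (v - u).
Proof. by rewrite -opprB ip_diagN. Qed.

Lemma ip_diagZ c v : ip (c *: v) (c *: v) = c * c^* * ip v v.
Proof. by rewrite ipZl ipZr mulrA. Qed.

Lemma hnorm_ge0 x : 0 <= hnorm ip x.
Proof. by rewrite sqrtC_ge0 ip_ge0. Qed.

Lemma hnormK x : hnorm ip x ^+ 2 = ip x x.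
Proof. exact: sqrtCK. Qed.

Lemma hnorm_lt v e : 0 < e -> (hnorm ip v < e) = (ip v v < e ^+ 2).
Proof. by move=> e0; rewrite -hnormK ltr_pXn2r // nnegrE ?hnorm_ge0 // ltW. Qed.

Lemma hnorm_le v e : 0 <= e -> (hnorm ip v <= e) = (ip v v <= e ^+ 2).
Proof. by move=> e0; rewrite -hnormK ler_pXn2r // nnegrE hnorm_ge0. Qed.

Lemma op_expand (S : {linear H -> H}) x y c :
  ip (S (x + c *: y)) (x + c *: y) =
  ip (S x) x + c^* * ip (S x) y + c * ip (S y) x + c * c^* * ip (S y) y.
Proof. by rewrite linearD linearZ ipDl ipZl !ipDr !ipZr; ring. Qed.

Lemma op_parallelogram (S : {linear H -> H}) a b :
  ip (S (a + b)) (a + b) + ip (S (a - b)) (a - b) =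
  2%:R * ip (S a) a + 2%:R * ip (S b) b.
Proof. by rewrite linearD linearB !ipDl !ipDr !ipNl !ipNr; ring. Qed.

Lemma cauchy_schwarz x y : `|ip x y| <= hnorm ip x * hnorm ip y.
Proof.
have [->|y0] := eqVneq y 0; first by rewrite ip0r normr0 mulr_ge0 ?hnorm_ge0.
set v := ip y y; set z := ip x y.
have vgt : 0 < v by rewrite lt_def ip_ge0 andbT; apply: contra_neq y0 => /ip_eq0.
have := ip_ge0 (x + (- (z / v)) *: y).
rewrite (op_expand idfun) /= -/v (ipC y x) -/z.
rewrite rmorphN rmorphM fmorphV /= [v^*](conj_Creal (ip_real y)) => h.
have : 0 <= ip x x * v - z * z^*.
  have -> : ip x x * v - z * z^* =
     (ip x x + - (z^* / v) * z + - (z / v) * z^* + - (z / v) * - (z^* / v) * v) * v.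
    by field; rewrite gt_eqF.
  by rewrite mulr_ge0 // ltW.
rewrite subr_ge0 -normCK => h2.
rewrite -(ler_pXn2r (n:=2)) // ?nnegrE ?mulr_ge0 ?hnorm_ge0 //.
by rewrite exprMn !hnormK.
Qed.

Lemma ip_diagD_le a b :
  ip (a + b) (a + b) <= ip a a + ip b b + 2%:R * (hnorm ip a * hnorm ip b).
Proof.
have := op_expand idfun a b 1; rewrite /= scale1r rmorph1 !mul1r => ->.
rewrite -!addrA lerD2l addrA addrC lerD2l (ipC b a).
apply: le_trans (addCJ_le_norm _) _.
by rewrite ler_pM2l ?ltr0n // cauchy_schwarz.
Qed.

Definition hcauchy (u : nat -> H) := forall e : C, 0 < e -> exists N : nat,
  forall m n : nat, (N <= m)%N -> (N <= n)%N -> ip (u m - u n) (u m - u n) < e.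

Definition hcvg (u : nat -> H) (l : H) := forall e : C, 0 < e -> exists N : nat,
  forall n : nat, (N <= n)%N -> ip (u n - l) (u n - l) < e.

Lemma hcauchy_cvg u : hcauchy u -> exists l, hcvg u l.
Proof.
move=> hu; have [l hl] : exists l, forall e : C, 0 < e -> exists N : nat,
    forall n : nat, (N <= n)%N -> hnorm ip (u n - l) < e.
  case: hH => _ _ _ _; apply => e e0.
  have [N hN] := hu (e ^+ 2) (exprn_gt0 _ e0).
  by exists N => m n hm hn; rewrite hnorm_lt // hN.
exists l => e e0; have e0' : 0 < sqrtC e by rewrite sqrtC_gt0.
have [N hN] := hl _ e0'.
by exists N => n /hN; rewrite hnorm_lt ?sqrtC_gt0 // sqrtCK.
Qed.

Lemma in_BH_normP (T : {linear H -> H}) : in_BH ip T ->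
  exists2 m : C, 0 < m & forall f, hnorm ip (T f) <= m * hnorm ip f.
Proof.
case=> M hM; exists (`|M| + 1) => [|f]; first by rewrite ltr_wpDl.
have hM0 : 0 <= M * hnorm ip f := le_trans (hnorm_ge0 _) (hM f).
apply: le_trans (hM f) _; rewrite -(ger0_norm hM0).
by rewrite normrM (ger0_norm (hnorm_ge0 f)) ler_wpM2r ?hnorm_ge0 // lerDl.
Qed.

Lemma nonneg_op_form_bounded (S : {linear H -> H}) : in_BH ip S -> nonneg_op ip S ->
  exists2 m : C, 0 < m & forall v, ip (S v) v <= m * ip v v.
Proof.
move=> /in_BH_normP[m m0 hm] hS; exists m => // v.
rewrite -(ger0_norm (hS v)) -hnormK expr2 mulrA.
apply: le_trans (cauchy_schwarz _ _) _.
by rewrite ler_wpM2r ?hnorm_ge0.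
Qed.

Lemma nonneg_op_isotropic (S : {linear H -> H}) a : nonneg_op ip S ->
  ip (S a) a = 0 -> forall y, ip (S a) y = 0 /\ ip (S y) a = 0.
Proof.
move=> hS ha y; apply: (sesq_ge0_eq0 (hS y)) => c.
by have := hS (a + c *: y); rewrite op_expand ha add0r.
Qed.

Lemma nonneg_op_eq0 (S : {linear H -> H}) a : nonneg_op ip S ->
  ip (S a) a = 0 -> S a = 0.
Proof. by move=> hS ha; apply: ip_eq0; case: (nonneg_op_isotropic hS ha (S a)). Qed.

Lemma nonneg_op_diagD_le (S : {linear H -> H}) a b : nonneg_op ip S ->
  ip (S (a + b)) (a + b) <= 2%:R * ip (S a) a + 2%:R * ip (S b) b.
Proof. by move=> hS; rewrite -op_parallelogram lerDl. Qed.

Lemma nonneg_op_cvg_eq0 (S : {linear H -> H}) u y : in_BH ip S -> nonneg_op ip S ->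
  hcvg u y -> seq_to0 (fun n => ip (S (u n)) (u n)) -> S y = 0.
Proof.
move=> hSb hS hu hSu; have [m m0 hm] := nonneg_op_form_bounded hSb hS.
apply: nonneg_op_eq0 => //; apply: ge0_lt_gt0_eq0 => [|e e0]; first exact: hS.
have e4 : 0 < e / 4%:R by rewrite divr_gt0 ?ltr0n.
have [N1 hN1] := hSu _ e4; have [N2 hN2] := hu _ (divr_gt0 e4 m0).
pose n := maxn N1 N2.
have small1 : ip (S (u n)) (u n) < e / 4%:R.
  by rewrite -(ger0_norm (hS (u n))) hN1 // leq_maxl.
have small2 : ip (S (y - u n)) (y - u n) < e / 4%:R.
  apply: le_lt_trans (hm _) _; rewrite ip_diagB mulrC -ltr_pdivlMr //.
  exact: hN2 (leq_maxr _ _).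
rewrite -(subrKC (u n) y); apply: le_lt_trans (nonneg_op_diagD_le _ _ hS) _.
have -> : e = 2%:R * (e / 4%:R) + 2%:R * (e / 4%:R) by field.
by rewrite ltrD // ltr_pM2l ?ltr0n.
Qed.

Lemma hcvg_orth u y k : hcvg u y -> (forall n, ip (u n) k = 0) -> ip y k = 0.
Proof.
move=> hu hk; apply/normr0_eq0/ge0_lt_gt0_eq0 => // e e0.
have k1 : 0 < hnorm ip k + 1 by rewrite ltr_wpDl ?hnorm_ge0.
have [N hN] := hu _ (exprn_gt0 2 (divr_gt0 e0 k1)).
have hlt : hnorm ip (y - u N) < e / (hnorm ip k + 1).
  by rewrite hnorm_lt ?divr_gt0 // ip_diagB hN.
rewrite -[y](subrK (u N)) ipDl hk addr0.
apply: le_lt_trans (cauchy_schwarz _ _) _.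
apply: le_lt_trans (ler_wpM2r (hnorm_ge0 k) (ltW hlt)) _.
by rewrite mulrAC ltr_pdivrMr // ltr_pM2l // ltrDl.
Qed.

Lemma hcvg_diag_le v y d : 0 <= d -> hcvg v y ->
  (forall e, 0 < e -> exists N, forall n, (N <= n)%N -> ip (v n) (v n) < d + e) ->
  ip y y <= d.
Proof.
move=> d0 hv hd; apply: ler_lt_addgt0 => [|e e0].
  by rewrite realB ?ip_real ?ger0_real.
pose D := sqrtC (d + 1).
have D1 : 0 < 2%:R * D + 1 by rewrite ltr_wpDl ?mulr_ge0 ?sqrtC_ge0 ?addr_ge0.
(* Eventually [|v n| <= D], so [|y - v n| < eta] keeps the cross term below [e/3]. *)
pose eta := e / (3%:R * (2%:R * D + 1)).
have eta0 : 0 < eta by rewrite divr_gt0 // mulr_gt0 ?ltr0n.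
have e3 : 0 < e / 3%:R by rewrite divr_gt0 ?ltr0n.
have [N1 hN1] := hd _ ltr01; have [N2 hN2] := hd _ e3.
have [N3 hN3] := hv _ e3; have [N4 hN4] := hv _ (exprn_gt0 2 eta0).
pose n := maxn (maxn N1 N2) (maxn N3 N4).
have hvn : ip (v n) (v n) < d + e / 3%:R by apply: hN2; rewrite !leq_max leqnn !orbT.
have hDn : hnorm ip (v n) <= D.
  rewrite hnorm_le ?sqrtC_ge0 ?addr_ge0 // sqrtCK; apply/ltW/hN1.
  by rewrite !leq_max leqnn.
have hw : ip (y - v n) (y - v n) < e / 3%:R.
  by rewrite ip_diagB hN3 // !leq_max leqnn !orbT.
have hwn : hnorm ip (y - v n) < eta.
  by rewrite hnorm_lt // ip_diagB hN4 // !leq_max leqnn !orbT.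
have cross : 2%:R * (hnorm ip (v n) * hnorm ip (y - v n)) <= e / 3%:R.
  apply: (le_trans (y := 2%:R * (D * eta))).
    by rewrite ler_wpM2l ?ler0n // ler_pM ?hnorm_ge0 // ltW.
  have -> : e / 3%:R = 2%:R * (D * eta) + eta by rewrite /eta; field; rewrite gt_eqF.
  by rewrite lerDl ltW.
rewrite -(subrKC (v n) y); apply: le_lt_trans (ip_diagD_le _ _) _.
have -> : d + e = d + e / 3%:R + e / 3%:R + e / 3%:R by field.
by rewrite ltr_leD // ltrD.
Qed.

Section OrthogonalProjection.
Variable K : H -> Prop.
Hypothesis K0 : K 0.
Hypothesis KDZ : forall a x y, K x -> K y -> K (a *: x + y).
Hypothesis K_closed : forall u l, (forall n, K (u n)) -> hcvg u l -> K l.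

Lemma near_minimizers_close x d k1 k2 e1 e2 :
  (forall k, K k -> d <= ip (x - k) (x - k)) -> K k1 -> K k2 ->
  ip (x - k1) (x - k1) < d + e1 -> ip (x - k2) (x - k2) < d + e2 ->
  ip (k1 - k2) (k1 - k2) < 2%:R * e1 + 2%:R * e2.
Proof.
move=> dlb Kk1 Kk2 h1 h2.
pose mid := (2%:R^-1 : C) *: (k1 + k2).
have Kmid : K mid.
  by rewrite /mid -[_ *: _]addr0; apply: KDZ => //; rewrite -[k1]scale1r; apply: KDZ.
have hpar := op_parallelogram idfun (x - k2) (x - k1).
have xsum : (x - k2) + (x - k1) = 2%:R *: (x - mid).
  rewrite scalerBr scalerA mulfV ?pnatr_eq0 // scale1r scaler_nat mulr2n opprD.
  by rewrite addrACA [- k2 - _]addrC.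
have xdiff : (x - k2) - (x - k1) = k1 - k2 by rewrite opprB addrC subrKA.
rewrite /= xsum xdiff ip_diagZ rmorph_nat in hpar.
have -> : ip (k1 - k2) (k1 - k2) =
    2%:R * ip (x - k2) (x - k2) + 2%:R * ip (x - k1) (x - k1)
    - 2%:R * 2%:R * ip (x - mid) (x - mid) by rewrite -hpar [RHS]addrAC subrr add0r.
have -> : 2%:R * e1 + 2%:R * e2 =
    2%:R * (d + e2) + 2%:R * (d + e1) - 2%:R * 2%:R * d by ring.
rewrite ltr_leD ?ltrD ?ltr_pM2l ?ltr0n //.
by rewrite lerN2 ler_wpM2l ?mulr_ge0 ?ler0n ?dlb.
Qed.

Lemma minimizer_orth x p : K p ->
  (forall k, K k -> ip (x - p) (x - p) <= ip (x - k) (x - k)) ->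
  forall k, K k -> ip (x - p) k = 0.
Proof.
move=> Kp pmin k Kk.
suff [] : ip (x - p) k = 0 /\ ip k (x - p) = 0 by [].
apply: (sesq_ge0_eq0 (ip_ge0 k)) => c.
have := pmin _ (KDZ (- c) Kk Kp).
have -> : x - (- c *: k + p) = (x - p) + c *: k.
  by rewrite scaleNr opprD opprK addrCA addrC.
by rewrite (op_expand idfun) /= -!addrA lerDl addrA.
Qed.

Lemma orth_proj_ex x : exists2 p, K p & forall k, K k -> ip (x - p) k = 0.
Proof.
(* A minimizing sequence for the distance from [x] to [K] is Cauchy by
   near_minimizers_close, and its limit attains the distance. *)
have [|z [k _ ->]|d [d0 dlb dapp]] :=
  @ge0_infC R (fun z => exists2 k, K k & z = ip (x - k) (x - k)).
- by exists (ip (x - 0) (x - 0)), 0.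
- exact: ip_ge0.
have dlbK k : K k -> d <= ip (x - k) (x - k) by move=> Kk; apply: dlb; exists k.
have [kk hkk] : {kk : nat -> H &
    forall n, K (kk n) /\ ip (x - kk n) (x - kk n) < d + n.+1%:R^-1}.
  apply: (@choice _ _ (fun n k => K k /\ ip (x - k) (x - k) < d + n.+1%:R^-1)) => n.
  have en : 0 < n.+1%:R^-1 :> C by rewrite invr_gt0 ltr0Sn.
  have [_ [k Kk ->] hk] := dapp _ en.
  by exists k.
have [p hp] : exists p, hcvg kk p.
  apply: hcauchy_cvg => e e0.
  have [N hN] := archiC (divr_gt0 e0 (ltr0Sn _ 3)).
  exists N => m n hm hn.
  apply: lt_trans (near_minimizers_close dlbK (hkk m).1 (hkk n).1 (hkk m).2 (hkk n).2) _.
  have -> : e = 2%:R * (e / 4%:R) + 2%:R * (e / 4%:R) by field.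
  by rewrite ltrD // ltr_pM2l ?ltr0n // hN.
have Kp : K p := K_closed (fun n => (hkk n).1) hp.
exists p => //; apply: minimizer_orth => // k Kk; apply: le_trans (dlbK _ Kk).
apply: (hcvg_diag_le (v := fun n => x - kk n)) => // e e0.
  have [N hN] := hp _ e0; exists N => n hn.
  by rewrite opprB addrC subrKA ip_diagB hN.
have [N hN] := archiC e0; exists N => n hn.
by apply: lt_le_trans (hkk n).2 _; rewrite lerD2l ltW // hN.
Qed.

Definition oproj x : H := s2val (cid2 (orth_proj_ex x)).

Lemma oproj_in x : K (oproj x).
Proof. by rewrite /oproj; case: cid2. Qed.

Lemma oproj_orth x k : K k -> ip (x - oproj x) k = 0.
Proof. by move=> Kk; rewrite /oproj; case: cid2 => p Kp hp; apply: hp. Qed.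

Lemma oproj_uniq x p : K p -> (forall k, K k -> ip (x - p) k = 0) -> oproj x = p.
Proof.
move=> Kp hp; apply/eqP; rewrite -subr_eq0; apply/eqP/ip_eq0.
have Kd : K (oproj x - p) by rewrite addrC -scaleN1r; apply: KDZ => //; apply: oproj_in.
have e : oproj x - p = (x - p) - (x - oproj x) by rewrite [RHS]addrC opprB subrKA.
by rewrite {1}e ipBl hp // oproj_orth // subr0.
Qed.

Lemma oproj_is_linear : linear oproj.
Proof.
move=> a x y; apply: oproj_uniq => [|k Kk]; first by apply: KDZ; apply: oproj_in.
have -> : a *: x + y - (a *: oproj x + oproj y) = a *: (x - oproj x) + (y - oproj y).
  by rewrite scalerBr opprD addrACA.
by rewrite ipDZl !oproj_orth // mulr0 addr0.
Qed.

HB.instance Definition _ := GRing.isLinear.Build C H H *:%R oproj oproj_is_linear.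

Lemma oproj_compl x : oproj (x - oproj x) = 0.
Proof. by apply: oproj_uniq => // k Kk; rewrite subr0 oproj_orth. Qed.

Lemma ip_oproj f : ip (oproj f) f = ip (oproj f) (oproj f).
Proof.
by rewrite -{2}(subrK (oproj f) f) ipDr ipC (oproj_orth _ (oproj_in f)) conjC0 add0r.
Qed.

Lemma ip_oproj_compl f : ip (f - oproj f) f = ip (f - oproj f) (f - oproj f).
Proof. by rewrite -{3}(subrK (oproj f) f) ipDr (oproj_orth _ (oproj_in f)) addr0. Qed.

Lemma ip_diag_oproj f :
  ip f f = ip (f - oproj f) (f - oproj f) + ip (oproj f) (oproj f).
Proof. by rewrite -ip_oproj -ip_oproj_compl -ipDl subrK. Qed.

Lemma ip_oproj_le f : ip (oproj f) (oproj f) <= ip f f.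
Proof. by rewrite [ip f f]ip_diag_oproj lerDr ip_ge0. Qed.

Lemma ip_oproj_compl_le f : ip (f - oproj f) (f - oproj f) <= ip f f.
Proof. by rewrite [ip f f]ip_diag_oproj lerDl ip_ge0. Qed.

End OrthogonalProjection.

Lemma comp_proj_in_Ml (T P : {linear H -> H}) : in_BH ip T ->
  (forall f, ip (P f) f = ip (P f) (P f)) -> (forall f, ip (P f) (P f) <= ip f f) ->
  exists2 c : C, 0 <= c & in_BH ip (T \o P) /\ in_Ml ip (T \o P) (c \*: P).
Proof.
move=> /in_BH_normP[m m0 hm] hPf hP.
have hPn f : hnorm ip (P f) <= hnorm ip f by rewrite hnorm_le ?hnorm_ge0 // hnormK hP.
have m2 : 0 <= m ^+ 2 by rewrite exprn_ge0 ?ltW.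
exists (m ^+ 2) => //; split.
  by exists m => f /=; apply: le_trans (hm _) (ler_wpM2l (ltW m0) (hPn f)).
split.
- exists (m ^+ 2) => f /=; rewrite (hnorm_le _ (mulr_ge0 m2 (hnorm_ge0 f))).
  rewrite ip_diagZ (conj_Creal (ger0_real m2)) exprMn hnormK -expr2.
  by apply: ler_wpM2l; [exact: exprn_ge0 | exact: hP].
- by move=> f /=; rewrite ipZl hPf mulr_ge0 ?ip_ge0.
exists idfun; split => [|f|f g] /=; first by exists 1 => f; rewrite mul1r.
  exact: ip_ge0.
rewrite ipZl hPf sqrtCM ?nnegrE ?ip_ge0 // (sqrCK (ltW m0)).
exact: le_trans (cauchy_schwarz _ _) (ler_wpM2r (hnorm_ge0 g) (hm _)).
Qed.

Section KernelProjection.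
Variable W : {linear H -> H}.
Hypotheses (hWb : in_BH ip W) (hWn : nonneg_op ip W).

Lemma ker_closed u l : (forall n, W (u n) = 0) -> hcvg u l -> W l = 0.
Proof.
move=> hu hl; apply: (nonneg_op_cvg_eq0 hWb hWn hl) => e e0.
by exists 0%N => n _; rewrite hu ip0l normr0.
Qed.

Lemma ker_DZ a x y : W x = 0 -> W y = 0 -> W (a *: x + y) = 0.
Proof. by move=> hx hy; rewrite linearP hx hy scaler0 addr0. Qed.

Definition kproj := oproj (K := fun k => W k = 0) (linear0 W) ker_DZ ker_closed.

Lemma W_kproj f : W (kproj f) = 0.
Proof. exact: (oproj_in (K := fun k => W k = 0)). Qed.

Lemma W_diag_kproj_compl f :
  ip (W (f - kproj f)) (f - kproj f) = ip (W f) f.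
Proof.
have WPf : ip (W (kproj f)) (kproj f) = 0 by rewrite W_kproj ip0l.
have [_ orth] := nonneg_op_isotropic hWn WPf f.
by rewrite linearB W_kproj subr0 ipDr ipNr orth oppr0 addr0.
Qed.

Lemma kproj_compl_abs_cont c : 0 <= c -> abs_cont ip W (c \*: (idfun \- kproj)).
Proof.
move=> c0 f hWf hcau.
pose q n := (idfun \- kproj) (f n).
have form v : ip ((c \*: (idfun \- kproj)) v) v =
    c * ip ((idfun \- kproj) v) ((idfun \- kproj) v).
  by rewrite /= ipZl ip_oproj_compl.
have [->|cn0] := eqVneq c 0.
  by move=> e e0; exists 0%N => n _; rewrite /= ipZl mul0r normr0.
have cp : 0 < c by rewrite lt_def cn0 c0.
have [y hy] : exists y, hcvg q y.
  apply: hcauchy_cvg => e e0.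
  have [N hN] := hcau _ (mulr_gt0 cp e0); exists N => m n hm hn.
  have := hN m n hm hn; rewrite form linearB ger0_norm ?mulr_ge0 ?ip_ge0 //.
  by rewrite ltr_pM2l.
have Wy : W y = 0.
  apply: (nonneg_op_cvg_eq0 hWb hWn hy) => e e0.
  have [N hN] := hWf e e0; exists N => n /hN.
  by rewrite /q /= W_diag_kproj_compl.
have y0 : y = 0.
  by apply: ip_eq0; apply: (hcvg_orth hy) => n; apply: oproj_orth.
move=> e e0; have [N hN] := hy (e / c) (divr_gt0 e0 cp); exists N => n /hN qn.
rewrite y0 subr0 in qn.
by rewrite form ger0_norm ?mulr_ge0 ?ip_ge0 // mulrC -ltr_pdivlMr.
Qed.

Lemma kproj_singular c : singular ip W (c \*: kproj).
Proof.
move=> Q _ hQn hQS hQW f.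
have vanish v : ip (Q v) v <= 0 -> Q v = 0.
  by move=> hv; apply: (nonneg_op_eq0 hQn); apply/le_anti; rewrite hv hQn.
have QP : Q (kproj f) = 0.
  by apply: vanish; apply: le_trans (hQW _) _; rewrite W_kproj ip0l.
have QPc : Q (f - kproj f) = 0.
  apply: vanish; apply: le_trans (hQS _) _.
  by rewrite /= /kproj oproj_compl scaler0 ip0l.
by rewrite -(subrK (kproj f) f) linearD QP QPc addr0.
Qed.

Lemma comp_kproj_compl_left_regular (T : {linear H -> H}) : in_BH ip T ->
  in_BH ip (T \o (idfun \- kproj)) /\ left_regular ip W (T \o (idfun \- kproj)).
Proof.
move=> hT; have [c c0 [hb hM]] := comp_proj_in_Ml (P := idfun \- kproj) hT
  (ip_oproj_compl (linear0 W) ker_DZ ker_closed)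
  (ip_oproj_compl_le (linear0 W) ker_DZ ker_closed).
split=> //; exists (c \*: (idfun \- kproj)); split=> //.
exact: kproj_compl_abs_cont.
Qed.

Lemma comp_kproj_left_strongly_singular (T : {linear H -> H}) : in_BH ip T ->
  in_BH ip (T \o kproj) /\ left_strongly_singular ip W (T \o kproj).
Proof.
move=> hT; have [c _ [hb hM]] := comp_proj_in_Ml (P := kproj) hT
  (ip_oproj (linear0 W) ker_DZ ker_closed) (ip_oproj_le (linear0 W) ker_DZ ker_closed).
split=> //; exists (c \*: kproj); split=> //.
exact: kproj_singular.
Qed.

End KernelProjection.
End InnerProductSpace.

Theorem mainTheorem4 (R : realType) (H : lmodType R[i]) (ip : H -> H -> R[i])
    (hH : is_hilbert ip) (T W : {linear H -> H}) :
  in_BH ip T -> in_BH ip W -> nonneg_op ip W ->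
  exists Tlr Tls : {linear H -> H},
    [/\ in_BH ip Tlr, in_BH ip Tls,
        (forall f : H, T f = Tlr f + Tls f),
        left_regular ip W Tlr &
        left_strongly_singular ip W Tls].
Proof.
move=> hT hWb hWn.
have [hlr_b hlr] := comp_kproj_compl_left_regular hH hWb hWn hT.
have [hls_b hls] := comp_kproj_left_strongly_singular hH hWb hWn hT.
exists (T \o (idfun \- kproj hH hWb hWn)), (T \o kproj hH hWb hWn); split => // f.
by rewrite /= -linearD subrK.
Qed.
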